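(* Let $(F,G)\in\tilde{\mathrm{Z}}_b^2(A)_\ell$ for some integer $\ell<0$, and put $r=-\ell$. For $x\otimes y\in(B\otimes B)_r$ one has $F(x,y)\in A_0=H$. Define $f\colon B\otimes B\to\Bbbk$ by $f|_{(B\otimes B)_r}=\lambda\circ F$ and $f|_{(B\otimes B)_s}=0$ for $s\neq r$. Then: 1. $f$ is an $H$-stable Hochschild $2$-cocycle of $B$ with coefficients in $\Bbbk$ via $\varepsilon$. 2. If $\tilde f\colon A\otimes A\to\Bbbk$ is the induced map $\tilde f(xh,yk)=f(x,h\cdot y)\varepsilon(k)$ for $x,y\in B$ and $h,k\in H$, then $F+\partial^c\tilde f$ vanishes on $(A\otimes A)_r$. Here $\partial^c\tilde f(a,b)=a_1b_1\tilde f(a_2,b_2)-\tilde f(a_1,b_1)a_2b_2$.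
   Context: Let $\Bbbk$ be an algebraically closed field of characteristic $0$. Let $H$ be a Hopf algebra over $\Bbbk$ with bijective antipode $\mathcal S$. Let ${}^H_H\mathcal{YD}$ be the braided category of left Yetter–Drinfeld modules over $H$, with coaction written $b\mapsto b_{-1}\otimes b_0$. Let $B=\bigoplus_{n\ge0}B_n$ be a graded connected bialgebra in ${}^H_H\mathcal{YD}$: $B_0=\Bbbk$, and each $B_n$ is a Yetter–Drinfeld submodule. Put $B^+=\bigoplus_{n>0}B_n$. Let $A=B\#H$ be the bosonization (Radford–Majid biproduct). It is graded by $A_n=B_n\# H$, so that $A_0=H$. Let $\pi\colon A\to H$, $b\#h\mapsto\varepsilon(b)h$, be the canonical projection. Write $\Delta(a)=a_1\otimes a_2$ in $A$. Grade $A\otimes A$ and $B\otimes B$ by total degree. Standing assumption: there is a linear map $\lambda\colon H\to\Bbbk$ with $\lambda(1)=1$, $h_1\lambda(h_2)=\lambda(h)1_H$ for all $h\in H$ (a right integral for $H^*$), and $\lambda(h_1k\mathcal S(h_2))=\varepsilon(h)\lambda(k)$ for all $h,k\in H$. Let $\widehat{\mathrm{Z}}_b^2(A)$ be the set of pairs $(f,g)$ of linear maps $f\colon A\otimes A\to A$ and $g\colon A\to A\otimes A$ satisfying the following conditions. - Normalization: $f(1,\cdot)=f(\cdot,1)=0$, $\varepsilon f=0$, $g(1)=0$, and $(\varepsilon\otimes\mathrm{id})g=(\mathrm{id}\otimes\varepsilon)g=0$. - Hochschild cocycle condition: $af(b,c)+f(a,bc)=f(ab,c)+f(a,b)c$.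 - Coalgebra cocycle condition: $c_1\otimes g(c_2)+(\mathrm{id}\otimes\Delta)g(c)=(\Delta\otimes\mathrm{id})g(c)+g(c_1)\otimes c_2$. - Compatibility: $f(a_1,b_1)\otimes a_2b_2-\Delta f(a,b)+a_1b_1\otimes f(a_2,b_2)=-\Delta(a)g(b)+g(ab)-g(a)\Delta(b)$. Let $\tilde{\mathrm{Z}}_b^2(A)$ be the set of $(f,g)\in\widehat{\mathrm{Z}}_b^2(A)$ that are $H$-bitrivial, i.e. $f|_{A_0\otimes A}=0=f|_{A\otimes A_0}$ and $(\pi\otimes\mathrm{id})g=0=(\mathrm{id}\otimes\pi)g$. The subscript $\ell$ denotes pairs homogeneous of degree $\ell$, i.e. $f((A\otimes A)_p)\subseteq A_{p+\ell}$ and $g(A_p)\subseteq(A\otimes A)_{p+\ell}$ for all $p$. A Hochschild $2$-cocycle of $B$ with coefficients in $\Bbbk$ via $\varepsilon$ is a linear map $\eta\colon B\otimes B\to\Bbbk$ with $\varepsilon(a)\eta(b,c)-\eta(ab,c)+\eta(a,bc)-\eta(a,b)\varepsilon(c)=0$. $H$ acts on such maps by $(h\cdot\eta)(x,y)=\eta(h_1\cdot x,h_2\cdot y)$, and $\eta$ is $H$-stable if $h\cdot\eta=\varepsilon(h)\eta$ for all $h\in H$. *)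

From HB Require Import structures.
From mathcomp Require Import all_boot all_order all_algebra.
Set Implicit Arguments. Unset Strict Implicit. Unset Printing Implicit Defensive.
Import GRing.Theory.
Local Open Scope ring_scope.

(* Tensors.  An element of V (x) W is represented by a finite formal sum     *)
(* sum_i v_i (x) w_i, i.e. a list of pairs.  Two formal sums are equal in    *)
(* V (x) W iff every bilinear form on V x W takes the same value on them     *)
(* (over a field, bilinear forms separate the points of V (x) W).            *)
Section Tensors.
Variable k : fieldType.

Definition tens (V W : Type) := seq (V * W).
Definition tens3 (U V W : Type) := seq (U * V * W).

Definition linform (V : lmodType k) (f : V -> k) :=
  forall a x y, f (a *: x + y) = a * f x + f y.
Definition linmap (V W : lmodType k) (f : V -> W) :=
  forall a x y, f (a *: x + y) = a *: f x + f y.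
Definition bilin (V W : lmodType k) (phi : V -> W -> k) :=
  (forall w, linform (phi^~ w)) /\ (forall v, linform (phi v)).
Definition bilinmap (V W U : lmodType k) (phi : V -> W -> U) :=
  (forall w, linmap (phi^~ w)) /\ (forall v, linmap (phi v)).
Definition trilin (U V W : lmodType k) (phi : U -> V -> W -> k) :=
  (forall v w, linform (fun u => phi u v w)) /\
  (forall u w, linform (fun v => phi u v w)) /\
  (forall u v, linform (fun w => phi u v w)).

Definition tsum (V W : lmodType k) (phi : V -> W -> k) (t : tens V W) : k :=
  \sum_(p <- t) phi p.1 p.2.
Definition tsum3 (U V W : lmodType k) (phi : U -> V -> W -> k)
  (t : tens3 U V W) : k := \sum_(p <- t) phi p.1.1 p.1.2 p.2.

Definition teq (V W : lmodType k) (s t : tens V W) :=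
  forall phi : V -> W -> k, bilin phi -> tsum phi s = tsum phi t.
Definition teq3 (U V W : lmodType k) (s t : tens3 U V W) :=
  forall phi : U -> V -> W -> k, trilin phi -> tsum3 phi s = tsum3 phi t.

Definition tscale (V W : lmodType k) (c : k) (t : tens V W) : tens V W :=
  [seq (c *: p.1, p.2) | p <- t].

Definition tlin (V W U : lmodType k) (f : V -> tens W U) :=
  forall a x y, teq (f (a *: x + y)) (tscale a (f x) ++ f y).

(* Hopf algebras (Sweedler: D h = sum h_1 (x) h_2).                          *)
Definition D2 (H : algType k) (D : H -> tens H H) (h : H) : tens3 H H H :=
  [seq (p.1, q.1, q.2) | p <- D h, q <- D p.2].

Record hopf_algebra (H : algType k) (D : H -> tens H H) (e : H -> k)
    (S : H -> H) : Prop := {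
  hD_lin : tlin D;
  he_lin : linform e;
  hS_lin : linmap S;
  hD_coassoc : forall h,
    teq3 [seq (p.1, q.1, q.2) | p <- D h, q <- D p.2]
         [seq (q.1, q.2, p.2) | p <- D h, q <- D p.1];
  hD_counitl : forall h, \sum_(p <- D h) e p.1 *: p.2 = h;
  hD_counitr : forall h, \sum_(p <- D h) e p.2 *: p.1 = h;
  hD_mul : forall h g, teq (D (h * g)) [seq (p.1 * q.1, p.2 * q.2) | p <- D h, q <- D g];
  hD_one : teq (D 1) [:: (1, 1)];
  he_mul : forall h g, e (h * g) = e h * e g;
  he_one : e 1 = 1;
  hS_left : forall h, \sum_(p <- D h) S p.1 * p.2 = e h *: 1;
  hS_right : forall h, \sum_(p <- D h) p.1 * S p.2 = e h *: 1;
  hS_bij : bijective S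
}.

Record integral_cond (H : algType k) (D : H -> tens H H) (e : H -> k)
    (S : H -> H) (lam : H -> k) : Prop := {
  lam_lin : linform lam;
  lam_one : lam 1 = 1;
  lam_right_int : forall h, \sum_(p <- D h) lam p.2 *: p.1 = lam h *: 1;
  lam_ad : forall h g, \sum_(p <- D h) lam (p.1 * g * S p.2) = e h * lam g
}.

(* modules over H.  act = left action, co b = sum b_{-1} (x) b_0.           *)
(* Bg n = projection of B onto its homogeneous component B_n.               *)
Record YD_graded_bialgebra (H : algType k) (D : H -> tens H H) (e : H -> k)
    (S : H -> H) (B : algType k) (act : H -> B -> B) (co : B -> tens H B)
    (DB : B -> tens B B) (eB : B -> k) (Bg : nat -> B -> B) : Prop := {
  act_lin1 : forall b, linmap (act^~ b);
  act_lin2 : forall h, linmap (act h);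
  act_one : forall b, act 1 b = b;
  act_mul : forall h g b, act (h * g) b = act h (act g b);
  co_lin : tlin co;
  co_coassoc : forall b,
    teq3 [seq (p.1, q.1, q.2) | p <- co b, q <- co p.2]
         [seq (q.1, q.2, p.2) | p <- co b, q <- D p.1];
  co_counit : forall b, \sum_(p <- co b) e p.1 *: p.2 = b;
  YD_compat : forall h b,
    teq (co (act h b))
        [seq (t.1.1 * c.1 * S t.2, act t.1.2 c.2) | t <- D2 D h, c <- co b];
  act_mulB : forall h x y,
    act h (x * y) = \sum_(p <- D h) act p.1 x * act p.2 y;
  act_oneB : forall h, act h 1 = e h *: 1;
  co_mulB : forall x y,
    teq (co (x * y)) [seq (p.1 * q.1, p.2 * q.2) | p <- co x, q <- co y];
  co_oneB : teq (co 1) [:: (1, 1)];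
  DB_lin : tlin DB;
  eB_lin : linform eB;
  DB_coassoc : forall b,
    teq3 [seq (p.1, q.1, q.2) | p <- DB b, q <- DB p.2]
         [seq (q.1, q.2, p.2) | p <- DB b, q <- DB p.1];
  DB_counitl : forall b, \sum_(p <- DB b) eB p.1 *: p.2 = b;
  DB_counitr : forall b, \sum_(p <- DB b) eB p.2 *: p.1 = b;
  DB_act : forall h b,
    teq (DB (act h b)) [seq (act q.1 p.1, act q.2 p.2) | q <- D h, p <- DB b];
  eB_act : forall h b, eB (act h b) = e h * eB b;
  DB_co : forall b,
    teq3 [seq (cd.1.1 * cd.2.1, cd.1.2, cd.2.2)
           | p <- DB b, cd <- [seq (c, d) | c <- co p.1, d <- co p.2]]
         [seq (c.1, q.1, q.2) | c <- co b, q <- DB c.2];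
  eB_co : forall b, \sum_(c <- co b) eB c.2 *: c.1 = eB b *: 1;
  DB_mul : forall x y,
    teq (DB (x * y))
        [seq (p.1 * act cq.1.1 cq.2.1, cq.1.2 * cq.2.2)
           | p <- DB x, cq <- [seq (c, q) | c <- co p.2, q <- DB y]];
  DB_one : teq (DB 1) [:: (1, 1)];
  eB_mul : forall x y, eB (x * y) = eB x * eB y;
  eB_one : eB 1 = 1;
  Bg_lin : forall n, linmap (Bg n);
  Bg_proj : forall m n x, Bg m (Bg n x) = if m == n then Bg n x else 0;
  Bg_fin : forall x, exists N, x = \sum_(n < N) Bg n x;
  Bg_act : forall n h x, Bg n (act h x) = act h (Bg n x);
  Bg_co : forall n x, teq (co (Bg n x)) [seq (p.1, Bg n p.2) | p <- co x];
  Bg_mul : forall m n x y, Bg m x = x -> Bg n y = y -> Bg (m + n) (x * y) = x * y;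
  Bg_one : Bg 0 1 = 1;
  Bg_DB : forall n x, Bg n x = x ->
    teq (DB x) [seq (Bg i p.1, Bg (n - i)%N p.2) | i <- iota 0 n.+1, p <- DB x];
  Bg_eB : forall n x, Bg n x = x -> (0 < n)%N -> eB x = 0;
  Bg_conn : forall x, Bg 0 x = x -> exists c, x = c *: 1
}.

(* The bosonization A = B # H, characterised by: iB : B -> A, b |-> b#1 and  *)
(* iH : H -> A, h |-> 1#h, such that B (x) H -> A, x (x) h |-> (x#1)(1#h) =  *)
(* x#h is a linear isomorphism, with the smash product, smash coproduct,     *)
(* counit and the canonical projection pi.                                  *)
Definition smash (B H A : algType k) (iB : B -> A) (iH : H -> A)
  (t : tens B H) : A := \sum_(p <- t) iB p.1 * iH p.2.

Record bosonization (H : algType k) (D : H -> tens H H) (e : H -> k)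
    (B : algType k) (act : H -> B -> B) (co : B -> tens H B)
    (DB : B -> tens B B) (eB : B -> k)
    (A : algType k) (DA : A -> tens A A) (eA : A -> k)
    (iB : B -> A) (iH : H -> A) (pi : A -> H) : Prop := {
  iB_lin : linmap iB;
  iB_mul : forall x y, iB (x * y) = iB x * iB y;
  iB_one : iB 1 = 1;
  iH_lin : linmap iH;
  iH_mul : forall h g, iH (h * g) = iH h * iH g;
  iH_one : iH 1 = 1;
  smash_surj : forall a, exists t : tens B H, a = smash iB iH t;
  smash_inj : forall t : tens B H, smash iB iH t = 0 -> teq t [::];
  smash_mul : forall h x, iH h * iB x = \sum_(p <- D h) iB (act p.1 x) * iH p.2;
  DA_lin : tlin DA;
  DA_smash : forall x h,
    teq (DA (iB x * iH h))
        [seq (iB p.1 * iH (cq.1.1 * cq.2.1), iB cq.1.2 * iH cq.2.2)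
           | p <- DB x, cq <- [seq (c, q) | c <- co p.2, q <- D h]];
  eA_lin : linform eA;
  eA_smash : forall x h, eA (iB x * iH h) = eB x * e h;
  pi_lin : linmap pi;
  pi_smash : forall x h, pi (iB x * iH h) = eB x *: h
}.

(* A_n = B_n # H *)
Definition Ahom (B H A : algType k) (Bg : nat -> B -> B) (iB : B -> A)
    (iH : H -> A) (n : nat) (a : A) : Prop :=
  exists t : tens B H, all (fun p => Bg n p.1 == p.1) t /\ a = smash iB iH t.

Record Zb2 (A : algType k) (DA : A -> tens A A) (eA : A -> k)
    (F : A -> A -> A) (G : A -> tens A A) : Prop := {
  F_bilin : bilinmap F;
  G_lin : tlin G;
  F_1l : forall b, F 1 b = 0;
  F_1r : forall a, F a 1 = 0;
  eA_F : forall a b, eA (F a b) = 0;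
  G_1 : teq (G 1) [::];
  eA_Gl : forall c, \sum_(q <- G c) eA q.1 *: q.2 = 0;
  eA_Gr : forall c, \sum_(q <- G c) eA q.2 *: q.1 = 0;
  hochschild : forall a b c, a * F b c + F a (b * c) = F (a * b) c + F a b * c;
  coalg_cocycle : forall c,
    teq3 ([seq (p.1, q.1, q.2) | p <- DA c, q <- G p.2]
            ++ [seq (q.1, s.1, s.2) | q <- G c, s <- DA q.2])
         ([seq (s.1, s.2, q.2) | q <- G c, s <- DA q.1]
            ++ [seq (q.1, q.2, p.2) | p <- DA c, q <- G p.1]);
  (* compatibility, with the negative terms moved to the other side *)
  compat : forall a b,
    teq ([seq (F p.1 q.1, p.2 * q.2) | p <- DA a, q <- DA b]
           ++ [seq (p.1 * q.1, F p.2 q.2) | p <- DA a, q <- DA b]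
           ++ [seq (p.1 * s.1, p.2 * s.2) | p <- DA a, s <- G b]
           ++ [seq (s.1 * q.1, s.2 * q.2) | s <- G a, q <- DA b])
        (DA (F a b) ++ G (a * b))
}.

Definition H_bitrivial (B H A : algType k) (Bg : nat -> B -> B) (iB : B -> A)
    (iH : H -> A) (pi : A -> H) (F : A -> A -> A) (G : A -> tens A A) :=
  (forall a b, Ahom Bg iB iH 0 a -> F a b = 0 /\ F b a = 0) /\
  (forall c, teq [seq (pi q.1, q.2) | q <- G c] [::]) /\
  (forall c, teq [seq (q.1, pi q.2) | q <- G c] [::]).

(* (f,g) homogeneous of degree l = -r  (A_m = 0 for m < 0) *)
Definition homog_neg (B H A : algType k) (Bg : nat -> B -> B) (iB : B -> A)
    (iH : H -> A) (r : nat) (F : A -> A -> A) (G : A -> tens A A) :=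
  (forall i j a b, Ahom Bg iB iH i a -> Ahom Bg iB iH j b ->
     if (r <= i + j)%N then Ahom Bg iB iH (i + j - r)%N (F a b) else F a b = 0) /\
  (forall p c, Ahom Bg iB iH p c ->
     exists t : tens A A, teq (G c) t /\
       forall q, q \in t -> exists i j,
         [/\ Ahom Bg iB iH i q.1, Ahom Bg iB iH j q.2 & (i + j + r)%N = p]).

(* The map f : B (x) B -> k: lambda o F on (B (x) B)_r, 0 on other degrees.
   On A_0 = H the projection pi is the identification A_0 = H. *)
Definition f_of (B H A : algType k) (Bg : nat -> B -> B) (iB : B -> A)
    (pi : A -> H) (lam : H -> k) (r : nat) (F : A -> A -> A) (x y : B) : k :=
  \sum_(i < r.+1) lam (pi (F (iB (Bg i x)) (iB (Bg (r - i)%N y)))).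

Definition hochschild_cocycle (B : algType k) (eB : B -> k) (eta : B -> B -> k) :=
  bilin eta /\
  forall a b c, eB a * eta b c - eta (a * b) c + eta a (b * c) - eta a b * eB c = 0.

Definition H_stable (H B : algType k) (D : H -> tens H H) (e : H -> k)
    (act : H -> B -> B) (eta : B -> B -> k) :=
  forall h x y, \sum_(p <- D h) eta (act p.1 x) (act p.2 y) = e h * eta x y.

Definition dc (A : algType k) (DA : A -> tens A A) (ft : A -> A -> k) (a b : A) : A :=
  \sum_(p <- DA a) \sum_(q <- DA b)
     (ft p.2 q.2 *: (p.1 * q.1) - ft p.1 q.1 *: (p.2 * q.2)).

End Tensors.

From HB Require Import structures.
From mathcomp Require Import all_boot all_order all_algebra.
From mathcomp Require boolp classical_sets.
From mathcomp Require Import ring zify.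
From Stdlib Require Import Classical ClassicalEpsilon.
Set Implicit Arguments. Unset Strict Implicit. Unset Printing Implicit Defensive.
Import GRing.Theory.
Local Open Scope ring_scope.

(* Since (F, G) is H-bitrivial, the Hochschild condition makes F H-bilinear:
   F(hu, v) = h F(u, v), F(uh, v) = F(u, hv) and F(u, vh) = F(u, v) h.  The
   projection pi is an algebra map killing B^+ # H, so lam o pi applied to the
   Hochschild condition on B is the cocycle identity for f, and H-bilinearity
   gives F(h_1.x, h_2.y) = h_1 F(x, y) S(h_2), whence H-stability by the
   ad-invariance of lam.  Applying id (x) lam o pi to the compatibility condition
   at x (x) y in (B (x) B)_r, the G-terms vanish because (id (x) pi) G = 0 and,
   by the grading, only the extreme terms of the coproducts survive:
   F(x, y) = f(x, y) - x_{-1} y_{-1} f(x_0, y_0).  Expanding d^c ft on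
   (x # h) (x) (y # g) the same way gives exactly the opposite of F(x # h, y # g).
   Equalities in tensor products are tested by bilinear forms; transporting them
   to vector-valued bilinear maps needs linear forms separating points, which
   Zorn's lemma provides. *)

Section LinearFunctionals.
Variables (k : fieldType) (V : lmodType k) (z : V).
Hypothesis z_neq0 : z != 0.

Definition partial_form (R : V * k -> Prop) :=
  [/\ R (z, 1), (forall v c d, R (v, c) -> R (v, d) -> c = d) &
      (forall a v w c d, R (v, c) -> R (w, d) -> R (a *: v + w, a * c + d))].
(* The empty graph is admitted so that the empty chain has an upper bound. *)
Definition partial_form0 (R : V * k -> Prop) :=
  R = (fun _ => False) \/ partial_form R.

Lemma partial_form_00 R : partial_form R -> R (0, 0).
Proof.
case=> Rz _ Rlin; have := Rlin (-1) _ _ _ _ Rz Rz.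
by rewrite scaleN1r addNr mulN1r addNr.
Qed.

Lemma partial_form0_bigcup (C : (V * k -> Prop) -> Prop) :
  classical_sets.subset C partial_form0 ->
  classical_sets.total_on C classical_sets.subset ->
  partial_form0 (classical_sets.bigcup C (fun R => R)).
Proof.
move=> Cpf Ctot.
have pfC R : C R -> forall t, R t -> partial_form R.
  by move=> CR t Rt; case: (Cpf R CR) => // E; rewrite E in Rt.
case: (classic (exists R, C R /\ partial_form R)) => [[R0 [CR0 pfR0]]|noR].
- right; split.
  + by exists R0 => //; case: pfR0.
  + move=> v c d [R1 C1 R1c] [R2 C2 R2d].
    case: (Ctot _ _ C1 C2) => sub.
    * by case: (pfC _ C2 _ R2d) => _ fn _; apply: fn (sub _ R1c) R2d.
    * by case: (pfC _ C1 _ R1c) => _ fn _; apply: fn R1c (sub _ R2d).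
  + move=> a v w c d [R1 C1 R1c] [R2 C2 R2d].
    case: (Ctot _ _ C1 C2) => sub.
    * by exists R2 => //; case: (pfC _ C2 _ R2d) => _ _ ln; exact: ln (sub _ R1c) R2d.
    * by exists R1 => //; case: (pfC _ C1 _ R1c) => _ _ ln; exact: ln R1c (sub _ R2d).
- left; apply: boolp.funext => t; apply: boolp.propext; split => // -[R CR Rt].
  by apply: noR; exists R; split => //; apply: pfC Rt.
Qed.

(* Otherwise a missing vector could be adjoined with the value 0. *)
Lemma maximal_partial_form_total R :
  partial_form R -> (forall R', classical_sets.proper R R' -> ~ partial_form0 R') ->
  forall v, exists c, R (v, c).
Proof.
move=> pfR Rmax v; apply: NNPP => nv.
have R00 := partial_form_00 pfR.
case: pfR => Rz Rfun Rlin.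
pose R' t := exists u c a, R (u, c) /\ t = (u + a *: v, c).
apply: (Rmax R'); last first.
  right; split.
  - by exists z, 1, 0; split => //; rewrite scale0r addr0.
  - move=> w c d [u [c' [a [Ru [-> ->]]]]] [u2 [d' [a2 [Ru2 [E1 ->]]]]].
    have [ea|nea] := eqVneq a a2.
      by move: E1; rewrite ea => /addIr Eu; rewrite Eu in Ru; apply: Rfun Ru Ru2.
    exfalso; apply: nv; exists ((a - a2)^-1 * (d' - c')).
    have -> : v = (a - a2)^-1 *: (u2 - u).
      apply: (@scalerI _ _ (a - a2)); first by rewrite subr_eq0.
      rewrite scalerA divff ?subr_eq0 // scale1r scalerBl.
      by rewrite -[a *: v](addKr u) E1 addrA addrK addrC.
    have Rnu : R (- u, - c') by have := Rlin (-1) _ _ _ _ Ru R00; rewrite scaleN1r mulN1r !addr0.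
    by have := Rlin ((a - a2)^-1) _ _ _ _ (Rlin 1 _ _ _ _ Ru2 Rnu) R00; rewrite !scale1r !mul1r !addr0.
  - move=> b w1 w2 c d [u [c' [a [Ru [-> ->]]]]] [u2 [d' [a2 [Ru2 [-> ->]]]]].
    exists (b *: u + u2), (b * c' + d'), (b * a + a2); split; first exact: Rlin.
    congr (_, _); rewrite scalerDr scalerDl scalerA.
    by rewrite -!addrA; congr (_ + _); rewrite addrC -addrA; congr (_ + _); rewrite addrC.
split.
- by move=> [u c] Ruc; exists u, c, 0; rewrite scale0r addr0.
- move=> sub; have [c Rvc] : exists c, R (v, c).
    by exists 0; apply: (sub (v, 0)); exists 0, 0, 1; rewrite scale1r add0r.
  by apply: nv; exists c.
Qed.

Lemma exists_linform_eq1 : exists l : V -> k, linform l /\ l z = 1.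
Proof.
have [R [pf0R Rmax]] := classical_sets.Zorn_bigcup partial_form0_bigcup.
pose line t := t.1 = t.2 *: z.
have pf_line : partial_form line.
  split; rewrite /line /=.
  - by rewrite scale1r.
  - move=> v c d -> /eqP; rewrite -subr_eq0 -scalerBl scaler_eq0 (negbTE z_neq0) orbF.
    by rewrite subr_eq0 => /eqP.
  - by move=> a v w c d -> ->; rewrite scalerDl scalerA.
have pfR : partial_form R.
  case: pf0R => // R0; exfalso; apply: (Rmax line); last by right.
  rewrite R0; split => //; move/(_ (0, 0)); apply; by rewrite /line /= scale0r.
have [l Rl] : exists l : V -> k, forall v, R (v, l v).
  have tot := maximal_partial_form_total pfR Rmax.
  exists (fun v => proj1_sig (constructive_indefinite_description _ (tot v))).
  by move=> v; case: constructive_indefinite_description.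
case: pfR => Rz Rfun Rlin; exists l; split.
- by move=> a x y; apply: Rfun (Rl _) (Rlin _ _ _ _ _ (Rl x) (Rl y)).
- by apply: Rfun (Rl _) Rz.
Qed.

End LinearFunctionals.

Lemma linform_separates (k : fieldType) (V : lmodType k) (z : V) :
  (forall l : V -> k, linform l -> l z = 0) -> z = 0.
Proof.
move=> lz0; apply/eqP; apply: contraT => z_neq0.
have [l [ll lz]] := exists_linform_eq1 z_neq0.
by move: (lz0 l ll); rewrite lz => /eqP; rewrite oner_eq0.
Qed.

Section LinearMaps.
Variable k : fieldType.
Implicit Types V W U M : lmodType k.

Lemma linmap0 V W (f : V -> W) : linmap f -> f 0 = 0.
Proof. by move=> lf; move: (lf 1 0 0); rewrite !scale1r addr0 -{1}[f 0]addr0 => /addrI. Qed.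
Lemma linmapD V W (f : V -> W) : linmap f -> forall x y, f (x + y) = f x + f y.
Proof. by move=> lf x y; move: (lf 1 x y); rewrite !scale1r. Qed.
Lemma linmapZ V W (f : V -> W) : linmap f -> forall a x, f (a *: x) = a *: f x.
Proof. by move=> lf a x; move: (lf a x 0); rewrite (linmap0 lf) !addr0. Qed.
Lemma linmapB V W (f : V -> W) : linmap f -> forall x y, f (x - y) = f x - f y.
Proof. by move=> lf x y; rewrite (linmapD lf) -scaleN1r (linmapZ lf) scaleN1r. Qed.
Lemma linmap_sum V W (f : V -> W) I (s : seq I) (g : I -> V) :
  linmap f -> f (\sum_(i <- s) g i) = \sum_(i <- s) f (g i).
Proof.
move=> lf; elim: s => [|i s IH]; first by rewrite !big_nil (linmap0 lf).
by rewrite !big_cons (linmapD lf) IH.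
Qed.
Lemma linmap_sumZ V W (f : V -> W) I (s : seq I) (w : I -> k) (g : I -> V) :
  linmap f -> \sum_(i <- s) w i *: f (g i) = f (\sum_(i <- s) w i *: g i).
Proof. by move=> lf; rewrite (linmap_sum _ _ lf); apply: eq_bigr => i _; rewrite (linmapZ lf). Qed.
Lemma linformD V (l : V -> k) : linform l -> forall x y, l (x + y) = l x + l y.
Proof. exact: (@linmapD V k^o). Qed.
Lemma linformZ V (l : V -> k) : linform l -> forall a x, l (a *: x) = a * l x.
Proof. exact: (@linmapZ V k^o). Qed.
Lemma linform_sum V (l : V -> k) I (s : seq I) (g : I -> V) :
  linform l -> l (\sum_(i <- s) g i) = \sum_(i <- s) l (g i).
Proof. exact: (@linmap_sum V k^o). Qed.

Definition trilinmap U V W M (phi : U -> V -> W -> M) :=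
  (forall v w, linmap (fun u => phi u v w)) /\
  (forall u w, linmap (fun v => phi u v w)) /\
  (forall u v, linmap (fun w => phi u v w)).

Lemma teq_sum V W M (s t : tens V W) (Phi : V * W -> M) :
  teq s t -> bilinmap (fun a b => Phi (a, b)) ->
  \sum_(p <- s) Phi p = \sum_(p <- t) Phi p.
Proof.
move=> st [P1 P2]; apply/eqP; rewrite -subr_eq0; apply/eqP; apply: linform_separates => l ll.
rewrite (@linmapB M k^o _ ll) !(linform_sum _ _ ll); apply/eqP; rewrite subr_eq0; apply/eqP.
have pairE (u : tens V W) : \sum_(p <- u) l (Phi p) = tsum (fun a b => l (Phi (a, b))) u.
  by apply: eq_bigr => -[].
rewrite !pairE; apply: st; split.
- by move=> w a x y /=; rewrite (P1 w) ll.
- by move=> v a x y /=; rewrite (P2 v) ll.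
Qed.

Lemma teq3_sum U V W M (s t : tens3 U V W) (Phi : U * V * W -> M) :
  teq3 s t -> trilinmap (fun a b c => Phi (a, b, c)) ->
  \sum_(p <- s) Phi p = \sum_(p <- t) Phi p.
Proof.
move=> st [P1 [P2 P3]]; apply/eqP; rewrite -subr_eq0; apply/eqP; apply: linform_separates => l ll.
rewrite (@linmapB M k^o _ ll) !(linform_sum _ _ ll); apply/eqP; rewrite subr_eq0; apply/eqP.
have tripleE (u : tens3 U V W) :
    \sum_(p <- u) l (Phi p) = tsum3 (fun a b c => l (Phi (a, b, c))) u.
  by apply: eq_bigr => -[[]].
rewrite !tripleE; apply: st; split; [|split].
- by move=> v w a x y /=; rewrite (P1 v w) ll.
- by move=> u w a x y /=; rewrite (P2 u w) ll.
- by move=> u v a x y /=; rewrite (P3 u v) ll.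
Qed.

Lemma linmap_id V : linmap (@id V).
Proof. by []. Qed.
Lemma linmap_mul_left (R : algType k) (c : R) : linmap (GRing.mul c).
Proof. by move=> a x y; rewrite mulrDr scalerAr. Qed.
Lemma linmap_add V M (P Q : V -> M) : linmap P -> linmap Q -> linmap (fun x => P x + Q x).
Proof. by move=> lP lQ a x y; rewrite lP lQ scalerDr addrACA. Qed.
Lemma linmap_opp V M (P : V -> M) : linmap P -> linmap (fun x => - P x).
Proof. by move=> lP a x y; rewrite lP opprD scalerN. Qed.
Lemma linmap_sub V M (P Q : V -> M) : linmap P -> linmap Q -> linmap (fun x => P x - Q x).
Proof. by move=> lP lQ; apply: linmap_add => //; apply: linmap_opp. Qed.
Lemma linmap_bigsum V M I (s : seq I) (G : V -> I -> M) :
  (forall i, linmap (fun x => G x i)) -> linmap (fun x => \sum_(i <- s) G x i).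
Proof. by move=> lG a x y; rewrite scaler_sumr -big_split; apply: eq_bigr => i _; exact: lG. Qed.
Lemma linmap_tsum V W U (X : lmodType k) M (f : X -> tens W U) (Phi : W * U -> M) (P : V -> X) :
  tlin f -> bilinmap (fun a b => Phi (a, b)) -> linmap P ->
  linmap (fun x => \sum_(p <- f (P x)) Phi p).
Proof.
move=> lf bP lP a x y; rewrite lP (teq_sum (lf a (P x) (P y)) bP) big_cat /= big_map.
rewrite scaler_sumr; congr (_ + _); apply: eq_bigr => p _ /=.
by case: bP => P1 _; rewrite (linmapZ (P1 _)); case: p.
Qed.
Lemma linmap_scale V M (c : k) (P : V -> M) : linmap P -> linmap (fun x => c *: P x).
Proof. by move=> lP a x y; rewrite lP scalerDr !scalerA mulrC. Qed.
Lemma linmap_scalel V M (l : V -> k) (v : M) : linform l -> linmap (fun x => l x *: v).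
Proof. by move=> ll a x y; rewrite ll scalerDl scalerA. Qed.
Lemma linmap_comp V W M (f : W -> M) (P : V -> W) :
  linmap f -> linmap P -> linmap (fun x => f (P x)).
Proof. by move=> lf lP a x y; rewrite lP lf. Qed.
Lemma linmap_mull V (R : algType k) (c : R) (P : V -> R) : linmap P -> linmap (fun x => c * P x).
Proof. by move=> lP a x y; rewrite lP mulrDr scalerAr. Qed.
Lemma linmap_mulr V (R : algType k) (c : R) (P : V -> R) : linmap P -> linmap (fun x => P x * c).
Proof. by move=> lP a x y; rewrite lP mulrDl scalerAl. Qed.
Lemma linform_mull V (c : k) (P : V -> k) : linform P -> linform (fun x => c * P x).
Proof. by move=> lP a x y; rewrite lP mulrDr !mulrA (mulrC c). Qed.
Lemma linform_mulr V (c : k) (P : V -> k) : linform P -> linform (fun x => P x * c).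
Proof. by move=> lP a x y; rewrite lP mulrDl mulrA. Qed.
Lemma linform_comp V W (f : W -> k) (P : V -> W) :
  linform f -> linmap P -> linform (fun x => f (P x)).
Proof. by move=> lf lP a x y; rewrite lP lf. Qed.
Lemma linform_add V (P Q : V -> k) : linform P -> linform Q -> linform (fun x => P x + Q x).
Proof. by move=> lP lQ a x y; rewrite lP lQ mulrDr addrACA. Qed.
Lemma linform_bigsum V I (s : seq I) (G : V -> I -> k) :
  (forall i, linform (fun x => G x i)) -> linform (fun x => \sum_(i <- s) G x i).
Proof. exact: (@linmap_bigsum V k^o). Qed.

Lemma bilinmap_l V W M (Psi : V -> W -> M) : bilinmap Psi -> forall w, linmap (Psi^~ w).
Proof. by case. Qed.
Lemma bilinmap_r V W M (Psi : V -> W -> M) : bilinmap Psi -> forall v, linmap (Psi v).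
Proof. by case. Qed.
Lemma bilin_l V W (Psi : V -> W -> k) : bilin Psi -> forall w, linform (Psi^~ w).
Proof. by case. Qed.
Lemma bilin_r V W (Psi : V -> W -> k) : bilin Psi -> forall v, linform (Psi v).
Proof. by case. Qed.
Lemma bilinmap_pair_l V W M (Phi : V * W -> M) :
  bilinmap (fun a b => Phi (a, b)) -> forall w, linmap (fun v => Phi (v, w)).
Proof. by case. Qed.
Lemma bilinmap_pair_r V W M (Phi : V * W -> M) :
  bilinmap (fun a b => Phi (a, b)) -> forall v, linmap (fun w => Phi (v, w)).
Proof. by case. Qed.
End LinearMaps.

Create HintDb linear.
#[export] Hint Resolve linmap_id linmap_mul_left : linear.

Ltac lin_atom := first [ solve [eauto with linear]
  | solve [apply: bilinmap_pair_l; eassumption] | solve [apply: bilinmap_pair_r; eassumption]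
  | solve [apply: bilinmap_l; eassumption] | solve [apply: bilinmap_r; eassumption]
  | solve [apply: bilin_l; eassumption] | solve [apply: bilin_r; eassumption]
  | match goal with Hb : forall _ _, bilinmap _ |- _ => solve [apply: (bilinmap_l (Hb _ _))] end
  | match goal with Hb : forall _ _, bilinmap _ |- _ => solve [apply: (bilinmap_r (Hb _ _))] end ].

Ltac solve_lin :=
  cbv beta; cbn [fst snd];
  lazymatch goal with
  | |- forall _, _ => intros; solve_lin
  | |- bilinmap _ => split => ?; solve_lin
  | |- bilin _ => split => ?; solve_lin
  | |- trilinmap _ => split; [|split] => ? ?; solve_lin
  | |- linform (fun x => _) => solve_linform
  | |- linform _ => lin_atom
  | |- linmap (fun x => _) => solve_linmap
  | |- linmap _ => lin_atom
  end
with solve_linmap :=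
  first
  [ exact: linmap_id
  | lin_atom
  | apply: linmap_add; solve_lin
  | apply: linmap_sub; solve_lin
  | apply: linmap_opp; solve_lin
  | apply: linmap_bigsum => ?; solve_lin
  | apply: linmap_tsum; [solve [eauto with linear] | solve_lin | solve_lin]
  | apply: linmap_scalel; solve_lin
  | apply: linmap_scale; solve_lin
  | apply: linmap_mull; solve_lin
  | apply: linmap_mulr; solve_lin
  | match goal with
    | |- linmap (fun x => ?f (@?P x, ?w)) =>
        apply: (@linmap_comp _ _ _ _ (fun a => f (a, w)) P); [lin_atom | solve_lin]
    | |- linmap (fun x => ?f (?w, @?P x)) =>
        apply: (@linmap_comp _ _ _ _ (fun a => f (w, a)) P); [lin_atom | solve_lin]
    | |- linmap (fun x => ?f (@?P x) ?w) =>
        apply: (@linmap_comp _ _ _ _ (fun a => f a w) P); [lin_atom | solve_lin]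
    | |- linmap (fun x => ?f ?w (@?P x)) =>
        apply: (@linmap_comp _ _ _ _ (fun a => f w a) P); [lin_atom | solve_lin]
    | |- linmap (fun x => ?f (@?P x)) =>
        apply: (@linmap_comp _ _ _ _ f P); [lin_atom | solve_lin]
    end ]
with solve_linform :=
  first
  [ lin_atom
  | apply: linform_add; solve_lin
  | apply: linform_bigsum => ?; solve_lin
  | apply: linform_mull; solve_lin
  | apply: linform_mulr; solve_lin
  | match goal with
    | |- linform (fun x => ?f (@?P x) ?w) =>
        apply: (@linform_comp _ _ _ (fun a => f a w) P); [lin_atom | solve_lin]
    | |- linform (fun x => ?f ?w (@?P x)) =>
        apply: (@linform_comp _ _ _ (fun a => f w a) P); [lin_atom | solve_lin]
    | |- linform (fun x => ?f (@?P x)) =>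
        apply: (@linform_comp _ _ _ f P); [lin_atom | solve_lin]
    end ].

Section Bosonization.
Variable k : fieldType.
Variables (H : algType k) (D : H -> tens H H) (e : H -> k) (S : H -> H).
Hypothesis hH : hopf_algebra D e S.
Variables (B : algType k) (act : H -> B -> B) (co : B -> tens H B)
  (DB : B -> tens B B) (eB : B -> k) (Bg : nat -> B -> B).
Hypothesis hB : YD_graded_bialgebra D e S act co DB eB Bg.
Variables (A : algType k) (DA : A -> tens A A) (eA : A -> k)
  (iB : B -> A) (iH : H -> A) (pi : A -> H).
Hypothesis hA : bosonization D e act co DB eB DA eA iB iH pi.

Let iB_linear : linmap iB := iB_lin hA.
Let iH_linear : linmap iH := iH_lin hA.
Let pi_linear : linmap pi := pi_lin hA.
Let act_linear_l b : linmap (act^~ b) := act_lin1 hB b.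
Let Bg_linear n : linmap (Bg n) := Bg_lin hB n.
Let S_linear : linmap S := hS_lin hH.
Let eB_linear : linform eB := eB_lin hB.
Let D_linear : tlin D := hD_lin hH.
Let co_linear : tlin co := co_lin hB.
Let DA_linear : tlin DA := DA_lin hA.
#[local] Hint Resolve iB_linear iH_linear pi_linear act_linear_l Bg_linear
  S_linear eB_linear D_linear co_linear DA_linear : linear.

Lemma pi_iB x : pi (iB x) = eB x *: 1.
Proof. by rewrite -[iB x]mulr1 -(iH_one hA) (pi_smash hA). Qed.

Lemma pi_iH h : pi (iH h) = h.
Proof. by rewrite -[iH h]mul1r -(iB_one hA) (pi_smash hA) (eB_one hB) scale1r. Qed.

Lemma pi_mul_smash x h y g :
  pi (iB x * iH h * (iB y * iH g)) = pi (iB x * iH h) * pi (iB y * iH g).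
Proof.
rewrite !(pi_smash hA) -scalerAl -scalerAr scalerA.
rewrite mulrA -(mulrA (iB x)) (smash_mul hA) mulr_sumr mulr_suml (linmap_sum _ _ pi_linear).
under eq_bigr => p _ do
  rewrite mulrA -(iB_mul hA) -mulrA -(iH_mul hA) (pi_smash hA) (eB_mul hB) (eB_act hB).
rewrite -[X in _ = _ *: (X * g)](hD_counitl hH h) mulr_suml scaler_sumr.
by apply: eq_bigr => p _; rewrite -scalerAl scalerA; congr (_ *: _); ring.
Qed.

Lemma pi_mul u v : pi (u * v) = pi u * pi v.
Proof.
have [t ->] := smash_surj hA u; have [t' ->] := smash_surj hA v.
rewrite /smash mulr_suml !(linmap_sum _ _ pi_linear) mulr_suml.
apply: eq_bigr => p _; rewrite big_distrr (linmap_sum _ _ pi_linear) big_distrr.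
by apply: eq_bigr => q _; rewrite pi_mul_smash.
Qed.

Lemma Bg_id n x : Bg n (Bg n x) = Bg n x.
Proof. by rewrite (Bg_proj hB) eqxx. Qed.

Lemma Bg_sum_large x : exists N, forall M, (N <= M)%N -> x = \sum_(m < M) Bg m x.
Proof.
have [N EN] := Bg_fin hB x; exists N => M le_NM.
have Bg_ge m : (N <= m)%N -> Bg m x = 0.
  move=> le_Nm; rewrite EN (linmap_sum _ _ (Bg_linear m)) big1 // => n _.
  rewrite (Bg_proj hB); case: eqP => [E|//]; move: (ltn_ord n); rewrite -E; lia.
rewrite {1}EN (big_ord_widen M (fun m => Bg m x) le_NM) big_mkcond /=.
by apply: eq_bigr => m _; case: ifP => // /negbT; rewrite -leqNgt => /Bg_ge ->.
Qed.

Lemma Bg0_eB u : Bg 0 u = eB u *: 1.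
Proof.
have [c Ec] := Bg_conn hB (Bg_id 0 u).
suff -> : eB u = c by [].
have [N EN] := Bg_sum_large u.
rewrite (EN N.+1 (leqnSn _)) (linform_sum _ _ eB_linear) big_ord_recl /= big1 ?addr0.
  by rewrite Ec (linformZ eB_linear) (eB_one hB) mulr1.
by move=> m _; apply: (Bg_eB hB); [exact: Bg_id | by []].
Qed.

Lemma Ahom_iB i x : Bg i x = x -> Ahom Bg iB iH i (iB x).
Proof.
move=> Ex; exists [:: (x, 1)]; split; first by rewrite /= Ex eqxx.
by rewrite /smash big_seq1 (iH_one hA) mulr1.
Qed.

Lemma Ahom_iH h : Ahom Bg iB iH 0 (iH h).
Proof.
exists [:: (1, h)]; split; first by rewrite /= (Bg_one hB) eqxx.
by rewrite /smash big_seq1 (iB_one hA) mul1r.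
Qed.

Lemma Ahom0_iH_pi z : Ahom Bg iB iH 0 z -> z = iH (pi z).
Proof.
move=> [t [/allP Ht ->]]; rewrite /smash (linmap_sum _ _ pi_linear).
rewrite (linmap_sum _ _ iH_linear); apply: eq_big_seq => p /Ht /eqP E.
rewrite (pi_smash hA) (linmapZ iH_linear) -{1}E Bg0_eB (linmapZ iB_linear) (iB_one hA).
by rewrite -scalerAl mul1r.
Qed.

Lemma pi_Ahom_gt0 n z : (0 < n)%N -> Ahom Bg iB iH n z -> pi z = 0.
Proof.
move=> n_gt0 [t [/allP Ht ->]]; rewrite /smash (linmap_sum _ _ pi_linear) big1_seq //.
by move=> p /Ht /eqP E; rewrite (pi_smash hA) (Bg_eB hB E n_gt0) scale0r.
Qed.

Lemma D_coassoc_sum (M : lmodType k) (Phi : H -> H -> H -> M) : trilinmap Phi -> forall h,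
  \sum_(p <- D h) \sum_(q <- D p.1) Phi q.1 q.2 p.2 =
  \sum_(p <- D h) \sum_(q <- D p.2) Phi p.1 q.1 q.2.
Proof.
move=> tP h; pose Phi3 (P : H * H * H) := Phi P.1.1 P.1.2 P.2.
have E1 := big_allpairs_dep (op := +%R) (idx := 0) (h := fun p q => (q.1, q.2, p.2))
  (r1 := D h) (r2 := fun p => D p.1) (F := Phi3).
have E2 := big_allpairs_dep (op := +%R) (idx := 0) (h := fun p q => (p.1, q.1, q.2))
  (r1 := D h) (r2 := fun p => D p.2) (F := Phi3).
rewrite /Phi3 /= in E1 E2; rewrite -E1 -E2.
by symmetry; apply: (teq3_sum (hD_coassoc hH h)).
Qed.

Lemma D_counitr_sum (M : lmodType k) (f : H -> M) h : linmap f ->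
  \sum_(q <- D h) e q.2 *: f q.1 = f h.
Proof. by move=> lf; rewrite (linmap_sumZ _ _ _ lf) (hD_counitr hH). Qed.

Lemma D_counitl_sum (M : lmodType k) (f : H -> M) h : linmap f ->
  \sum_(q <- D h) e q.1 *: f q.2 = f h.
Proof. by move=> lf; rewrite (linmap_sumZ _ _ _ lf) (hD_counitl hH). Qed.

Lemma eB_co_sum (M : lmodType k) (f : H -> M) b : linmap f ->
  \sum_(c <- co b) eB c.2 *: f c.1 = eB b *: f 1.
Proof. by move=> lf; rewrite (linmap_sumZ _ _ _ lf) (eB_co hB) (linmapZ lf). Qed.

Lemma co_Bg_sum (M : lmodType k) (Phi : H * B -> M) n w :
  bilinmap (fun a b => Phi (a, b)) ->
  \sum_(c <- co (Bg n w)) Phi c = \sum_(c <- co w) Phi (c.1, Bg n c.2).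
Proof. by move=> bP; rewrite (teq_sum (Bg_co hB n w) bP) big_map. Qed.

Lemma DA_smash_sum (M : lmodType k) (Phi : A * A -> M) x h :
  bilinmap (fun a b => Phi (a, b)) ->
  \sum_(p <- DA (iB x * iH h)) Phi p =
  \sum_(p <- DB x) \sum_(c <- co p.2) \sum_(q <- D h)
     Phi (iB p.1 * iH (c.1 * q.1), iB c.2 * iH q.2).
Proof.
move=> bP; rewrite (teq_sum (DA_smash hA x h) bP) big_allpairs_dep.
by apply: eq_bigr => p _; rewrite big_allpairs_dep.
Qed.

Lemma DA_iB_sum (M : lmodType k) (Phi : A * A -> M) x :
  bilinmap (fun a b => Phi (a, b)) ->
  \sum_(p <- DA (iB x)) Phi p =
  \sum_(p <- DB x) \sum_(c <- co p.2) Phi (iB p.1 * iH c.1, iB c.2).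
Proof.
move=> bP; rewrite -[iB x]mulr1 -(iH_one hA) DA_smash_sum //.
apply: eq_bigr => p _; apply: eq_bigr => c _.
rewrite (teq_sum (hD_one hH)) ?big_seq1 /= ?mulr1 ?(iH_one hA) ?mulr1 //.
solve_lin.
Qed.

Lemma DA_iH_sum (M : lmodType k) (Phi : A * A -> M) g :
  bilinmap (fun a b => Phi (a, b)) ->
  \sum_(p <- DA (iH g)) Phi p = \sum_(q <- D g) Phi (iH q.1, iH q.2).
Proof.
move=> bP; rewrite -[iH g]mul1r -(iB_one hA) DA_smash_sum //.
rewrite (teq_sum (DB_one hB)); last by solve_lin.
rewrite big_seq1 /= (teq_sum (co_oneB hB)); last by solve_lin.
by rewrite big_seq1 /=; apply: eq_bigr => q _; rewrite !mul1r (iB_one hA) !mul1r.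
Qed.

Lemma DA_iB2_sum (M : lmodType k) (K : A -> A -> A -> A -> M) x y :
  (forall c d, bilinmap (fun a b => K a b c d)) -> (forall a b, bilinmap (fun c d => K a b c d)) ->
  \sum_(p <- DA (iB x)) \sum_(q <- DA (iB y)) K p.1 p.2 q.1 q.2 =
  \sum_(p <- DB x) \sum_(q <- DB y) \sum_(c <- co p.2) \sum_(d <- co q.2)
     K (iB p.1 * iH c.1) (iB c.2) (iB q.1 * iH d.1) (iB d.2).
Proof.
move=> bK1 bK2.
rewrite (DA_iB_sum (Phi := fun P => \sum_(q <- DA (iB y)) K P.1 P.2 q.1 q.2)); last by solve_lin.
apply: eq_bigr => p _ /=; rewrite [RHS]exchange_big /=; apply: eq_bigr => c _.
by rewrite (DA_iB_sum (Phi := fun Q => K _ _ Q.1 Q.2)) //; solve_lin.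
Qed.

Lemma DA_smash2_sum (M : lmodType k) (K : A -> A -> A -> A -> M) x h y g :
  (forall c d, bilinmap (fun a b => K a b c d)) -> (forall a b, bilinmap (fun c d => K a b c d)) ->
  \sum_(P <- DA (iB x * iH h)) \sum_(Q <- DA (iB y * iH g)) K P.1 P.2 Q.1 Q.2 =
  \sum_(p <- DB x) \sum_(q <- DB y) \sum_(c <- co p.2) \sum_(s <- D h)
     \sum_(d <- co q.2) \sum_(t <- D g)
     K (iB p.1 * iH (c.1 * s.1)) (iB c.2 * iH s.2) (iB q.1 * iH (d.1 * t.1)) (iB d.2 * iH t.2).
Proof.
move=> bK1 bK2.
rewrite (DA_smash_sum (Phi := fun P => \sum_(Q <- DA (iB y * iH g)) K P.1 P.2 Q.1 Q.2));
  last by solve_lin.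
apply: eq_bigr => p _ /=; rewrite [RHS]exchange_big /=; apply: eq_bigr => c _.
rewrite [RHS]exchange_big /=; apply: eq_bigr => s _.
by rewrite (DA_smash_sum (Phi := fun Q => K _ _ Q.1 Q.2)) //; solve_lin.
Qed.

Lemma DA_iB_pi_sum (M : lmodType k) (Th : A -> H -> M) x : bilinmap Th ->
  \sum_(p <- DA (iB x)) Th p.1 (pi p.2) = Th (iB x) 1.
Proof.
move=> bT; rewrite (DA_iB_sum (Phi := fun P => Th P.1 (pi P.2))); last by solve_lin.
have inner (p : B * B) : \sum_(c <- co p.2) Th (iB p.1 * iH c.1) (pi (iB c.2)) =
    eB p.2 *: Th (iB p.1) 1.
  transitivity (eB p.2 *: Th (iB p.1 * iH 1) 1); last by rewrite (iH_one hA) mulr1.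
  rewrite -(eB_co_sum (f := fun h => Th (iB p.1 * iH h) 1)); last by solve_lin.
  by apply: eq_bigr => c _; rewrite pi_iB (linmapZ (bilinmap_r bT _)).
rewrite (eq_bigr _ (fun p _ => inner p)) (linmap_sumZ _ _ _ (bilinmap_l bT 1)).
by rewrite (linmap_sumZ _ _ _ iB_linear) (DB_counitr hB).
Qed.

Lemma DB_graded_sum (M : lmodType k) (Phi : B * B -> M) i x : Bg i x = x ->
  bilinmap (fun a b => Phi (a, b)) ->
  \sum_(p <- DB x) Phi p =
  \sum_(a <- iota 0 i.+1) \sum_(p <- DB x) Phi (Bg a p.1, Bg (i - a) p.2).
Proof. by move=> Ex bP; rewrite (teq_sum (Bg_DB hB Ex) bP) big_allpairs_dep. Qed.

Lemma DB_sum_1x (M : lmodType k) (Phi : B * B -> M) i x : Bg i x = x ->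
  bilinmap (fun a b => Phi (a, b)) ->
  (forall u m v, (m < i)%N -> Phi (u, Bg m v) = 0) ->
  \sum_(p <- DB x) Phi p = Phi (1, x).
Proof.
move=> Ex bP Phi0; rewrite (DB_graded_sum Ex bP) /= big_cons [X in _ + X]big1_seq ?addr0;
  last first.
  move=> a /andP [_]; rewrite mem_iota => /andP [a1 a2].
  by apply: big1 => p _; apply: Phi0; lia.
under eq_bigr => p _ do rewrite Bg0_eB subn0.
have scaleE (p : B * B) : Phi (eB p.1 *: 1, Bg i p.2) = eB p.1 *: Phi (1, Bg i p.2).
  exact: (linmapZ (bilinmap_pair_l bP _)).
rewrite (eq_bigr _ (fun p _ => scaleE p)).
rewrite (linmap_sumZ (f := fun v => Phi (1, Bg i v))); last by solve_lin.
by rewrite (DB_counitl hB) Ex.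
Qed.

Lemma DB_sum_x1 (M : lmodType k) (Phi : B * B -> M) i x : Bg i x = x ->
  bilinmap (fun a b => Phi (a, b)) ->
  (forall u m v, (m < i)%N -> Phi (Bg m u, v) = 0) ->
  \sum_(p <- DB x) Phi p = Phi (x, 1).
Proof.
move=> Ex bP Phi0; rewrite (DB_graded_sum Ex bP) -addn1 iotaD big_cat /=.
rewrite [X in X + _]big1_seq ?add0r; last first.
  move=> a /andP [_]; rewrite mem_iota => /andP [a2 a1].
  by apply: big1 => p _; apply: Phi0; lia.
rewrite big_seq1 subnn.
under eq_bigr => p _ do rewrite Bg0_eB.
have scaleE (p : B * B) : Phi (Bg i p.1, eB p.2 *: 1) = eB p.2 *: Phi (Bg i p.1, 1).
  exact: (linmapZ (bilinmap_pair_r bP _)).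
rewrite (eq_bigr _ (fun p _ => scaleE p)).
rewrite (linmap_sumZ (f := fun v => Phi (Bg i v, 1))); last by solve_lin.
by rewrite (DB_counitr hB) Ex.
Qed.

Lemma DB2_sum_1x1y (M : lmodType k) (Psi : B -> B -> B -> B -> M) i j x y :
  Bg i x = x -> Bg j y = y ->
  (forall v1 v2, bilinmap (fun u1 u2 => Psi u1 u2 v1 v2)) ->
  (forall u1 u2, bilinmap (fun v1 v2 => Psi u1 u2 v1 v2)) ->
  (forall u1 m u2 v1 n v2, (m + n < i + j)%N -> Psi u1 (Bg m u2) v1 (Bg n v2) = 0) ->
  \sum_(p <- DB x) \sum_(q <- DB y) Psi p.1 p.2 q.1 q.2 = Psi 1 x 1 y.
Proof.
move=> Ex Ey bPsi1 bPsi2 Psi0.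
rewrite (DB_sum_1x (Phi := fun P => \sum_(q <- DB y) Psi P.1 P.2 q.1 q.2) Ex) /=; first last.
- move=> u m v lt_mi.
  rewrite (DB_graded_sum (Phi := fun Q => Psi u (Bg m v) Q.1 Q.2) Ey) /=; last by solve_lin.
  by apply: big1 => b _; apply: big1 => q _; apply: Psi0; lia.
- by solve_lin.
apply: (DB_sum_1x (Phi := fun Q => Psi 1 x Q.1 Q.2) Ey); first by solve_lin.
by move=> u m v lt_mj; rewrite -Ex; apply: Psi0; lia.
Qed.

Lemma DB2_sum_x1y1 (M : lmodType k) (Psi : B -> B -> B -> B -> M) i j x y :
  Bg i x = x -> Bg j y = y ->
  (forall v1 v2, bilinmap (fun u1 u2 => Psi u1 u2 v1 v2)) ->
  (forall u1 u2, bilinmap (fun v1 v2 => Psi u1 u2 v1 v2)) ->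
  (forall m u1 u2 n v1 v2, (m + n < i + j)%N -> Psi (Bg m u1) u2 (Bg n v1) v2 = 0) ->
  \sum_(p <- DB x) \sum_(q <- DB y) Psi p.1 p.2 q.1 q.2 = Psi x 1 y 1.
Proof.
move=> Ex Ey bPsi1 bPsi2 Psi0.
rewrite (DB_sum_x1 (Phi := fun P => \sum_(q <- DB y) Psi P.1 P.2 q.1 q.2) Ex) /=; first last.
- move=> u m v lt_mi.
  rewrite (DB_graded_sum (Phi := fun Q => Psi (Bg m u) v Q.1 Q.2) Ey); last by solve_lin.
  apply: big1_seq => b /andP [_]; rewrite mem_iota => /andP [_ lt_bj].
  by apply: big1 => q _; apply: Psi0; lia.
- by solve_lin.
apply: (DB_sum_x1 (Phi := fun Q => Psi x 1 Q.1 Q.2) Ey); first by solve_lin.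
by move=> u m v lt_mj; rewrite -Ex; apply: Psi0; lia.
Qed.

(* The Yetter-Drinfeld condition, with S cancelled against the last leg of D h. *)
Lemma co_act_sum (M : lmodType k) (Th : H -> B -> M) h y : bilinmap Th ->
  \sum_(s <- D h) \sum_(d <- co (act s.1 y)) Th (d.1 * s.2) d.2 =
  \sum_(s <- D h) \sum_(d <- co y) Th (s.1 * d.1) (act s.2 d.2).
Proof.
move=> bT.
pose Phi4 a b c f := \sum_(d <- co y) Th (a * d.1 * S c * f) (act b d.2).
have YD (s : H * H) : \sum_(d <- co (act s.1 y)) Th (d.1 * s.2) d.2 =
    \sum_(p <- D s.1) \sum_(q <- D p.2) Phi4 p.1 q.1 q.2 s.2.
  rewrite (teq_sum (YD_compat hB s.1 y)); last by solve_lin.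
  by rewrite big_allpairs_dep /D2 big_allpairs_dep; apply: eq_bigr => p _.
rewrite (eq_bigr _ (fun s _ => YD s)).
rewrite (D_coassoc_sum (Phi := fun a b f => \sum_(q <- D b) Phi4 a q.1 q.2 f));
  last by rewrite /Phi4; solve_lin.
apply: eq_bigr => s _.
rewrite (D_coassoc_sum (Phi := fun b c f => Phi4 s.1 b c f)); last by rewrite /Phi4; solve_lin.
have antipode (p : H * H) : \sum_(q <- D p.2) Phi4 s.1 p.1 q.1 q.2 =
    e p.2 *: \sum_(d <- co y) Th (s.1 * d.1) (act p.1 d.2).
  rewrite /Phi4 exchange_big scaler_sumr; apply: eq_bigr => d _.
  under eq_bigr => q _ do rewrite -mulrA.
  have lf : linmap (fun z => Th (s.1 * d.1 * z) (act p.1 d.2)) by solve_lin.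
  rewrite -(linmap_sum _ (fun q => S q.1 * q.2) lf) /= (hS_left hH).
  by rewrite -scalerAr mulr1 (linmapZ (bilinmap_l bT _)).
rewrite (eq_bigr _ (fun p _ => antipode p)).
by rewrite (D_counitr_sum (f := fun b => \sum_(d <- co y) Th (s.1 * d.1) (act b d.2)));
  last by solve_lin.
Qed.

Section NegativeDegreeCocycle.
Variables (lam : H -> k) (r : nat) (F : A -> A -> A) (G : A -> tens A A).
Hypotheses (hlam : integral_cond D e S lam) (hFG : Zb2 DA eA F G)
  (hbitriv : H_bitrivial Bg iB iH pi F G) (hdeg : homog_neg Bg iB iH r F G).

Let F_linear_l v : linmap (F^~ v) := (F_bilin hFG).1 v.
Let F_linear_r u : linmap (F u) := (F_bilin hFG).2 u.
Let lam_linear : linform lam := lam_lin hlam.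
#[local] Hint Resolve F_linear_l F_linear_r lam_linear : linear.

Local Notation f := (f_of Bg iB pi lam r F).

Lemma pi_F_off_degree m n u v : Bg m u = u -> Bg n v = v -> (m + n != r)%N ->
  pi (F (iB u) (iB v)) = 0.
Proof.
move=> Eu Ev ne; have := hdeg.1 m n _ _ (Ahom_iB Eu) (Ahom_iB Ev).
case: ifP => [le_rmn|_ ->]; last exact: (linmap0 pi_linear).
by apply: pi_Ahom_gt0; lia.
Qed.

Lemma lam_pi_F_off_degree m n u v : (m + n != r)%N ->
  lam (pi (F (iB (Bg m u)) (iB (Bg n v)))) = 0.
Proof.
move=> ne; rewrite (@pi_F_off_degree m n) ?Bg_id //.
exact: (@linmap0 _ _ k^o _ lam_linear).
Qed.

Lemma f_ofE x y : f x y = lam (pi (F (iB x) (iB y))).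
Proof.
have [Nx Ex] := Bg_sum_large x; have [Ny Ey] := Bg_sum_large y.
pose N := maxn (maxn Nx Ny) r.+1.
have {}Ex : x = \sum_(m < N) Bg m x by apply: Ex; lia.
have {}Ey : y = \sum_(m < N) Bg m y by apply: Ey; lia.
rewrite [in RHS]Ex [in RHS]Ey.
rewrite !(linmap_sum _ _ iB_linear) (linmap_sum _ _ (F_linear_l _)).
rewrite (linmap_sum _ _ pi_linear) (linform_sum _ _ lam_linear).
have le_rN : (r.+1 <= N)%N by lia.
rewrite /f_of (big_ord_widen N (fun i => lam (pi (F (iB (Bg i _)) (iB (Bg (r - i) _))))) le_rN).
rewrite big_mkcond /=; apply: eq_bigr => i _.
rewrite (linmap_sum _ _ (F_linear_r _)) (linmap_sum _ _ pi_linear) (linform_sum _ _ lam_linear).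
case: ifP => le_ir.
- have lt_riN : (r - i < N)%N by lia.
  rewrite (bigD1 (Ordinal lt_riN)) //= big1 ?addr0 // => j ne_j.
  apply: lam_pi_F_off_degree; apply: contra ne_j => /eqP E.
  by apply/eqP/val_inj => /=; lia.
- by apply/esym/big1 => j _; apply: lam_pi_F_off_degree; lia.
Qed.

Lemma F_deg_r_Ahom0 i j x y : Bg i x = x -> Bg j y = y -> (i + j)%N = r ->
  Ahom Bg iB iH 0 (F (iB x) (iB y)).
Proof.
move=> Ex Ey E; have := hdeg.1 i j _ _ (Ahom_iB Ex) (Ahom_iB Ey).
by rewrite E leqnn subnn.
Qed.

Lemma F_iHl h v : F (iH h) v = 0.
Proof. exact: (hbitriv.1 _ v (Ahom_iH h)).1. Qed.
Lemma F_iHr u h : F u (iH h) = 0.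
Proof. exact: (hbitriv.1 _ u (Ahom_iH h)).2. Qed.

Lemma F_mul_iHl h u v : F (iH h * u) v = iH h * F u v.
Proof. by have := hochschild hFG (iH h) u v; rewrite !F_iHl mul0r !addr0 => ->. Qed.
Lemma F_mul_iH_mid u h v : F (u * iH h) v = F u (iH h * v).
Proof. by have := hochschild hFG u (iH h) v; rewrite F_iHl F_iHr mulr0 mul0r add0r addr0. Qed.
Lemma F_mul_iHr u v h : F u (v * iH h) = F u v * iH h.
Proof. by have := hochschild hFG u v (iH h); rewrite !F_iHr mulr0 add0r => ->; rewrite add0r. Qed.

Lemma f_bilin : bilin f.
Proof.
have fE : f = fun x y => lam (pi (F (iB x) (iB y))).
  by apply: boolp.funext => x; apply: boolp.funext => y; exact: f_ofE.
rewrite fE; solve_lin.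
Qed.

Lemma f_cocycle : hochschild_cocycle eB f.
Proof.
split; first exact: f_bilin.
move=> a b c; rewrite !f_ofE !(iB_mul hA).
have := congr1 (fun z => lam (pi z)) (hochschild hFG (iB a) (iB b) (iB c)).
rewrite !(linmapD pi_linear) !(linformD lam_linear) !pi_mul !pi_iB.
rewrite -scalerAl -scalerAr mul1r mulr1 !(linformZ lam_linear) => E.
by rewrite [_ - _ + _]addrAC E [eB c * _]mulrC addrAC addrK subrr.
Qed.

Lemma F_act_sum h x y :
  \sum_(p <- D h) F (iB (act p.1 x)) (iB (act p.2 y)) =
  \sum_(p <- D h) iH p.1 * F (iB x) (iB y) * iH (S p.2).
Proof.
pose Psi a b c := F (iB (act a x)) (iB (act b y) * iH c).
have smashE (p : H * H) : iH p.1 * F (iB x) (iB y) * iH (S p.2) =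
    \sum_(q <- D p.1) \sum_(s <- D q.2) Psi q.1 s.1 (s.2 * S p.2).
  rewrite -F_mul_iHl -F_mul_iHr (smash_mul hA) (linmap_sum _ _ (F_linear_l _)).
  apply: eq_bigr => q _; rewrite F_mul_iH_mid mulrA (smash_mul hA) big_distrl /=.
  rewrite (linmap_sum _ _ (F_linear_r _)).
  by apply: eq_bigr => s _; rewrite /Psi -mulrA -(iH_mul hA).
rewrite (eq_bigr _ (fun p _ => smashE p)).
rewrite (D_coassoc_sum (Phi := fun a b c => \sum_(s <- D b) Psi a s.1 (s.2 * S c)));
  last by rewrite /Psi; solve_lin.
apply: eq_bigr => p _.
rewrite (D_coassoc_sum (Phi := fun a b c => Psi p.1 a (b * S c))); last by rewrite /Psi; solve_lin.
have antipode (q : H * H) :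
    \sum_(s <- D q.2) Psi p.1 q.1 (s.1 * S s.2) = e q.2 *: Psi p.1 q.1 1.
  have lPsi : linmap (fun c => Psi p.1 q.1 c) by rewrite /Psi; solve_lin.
  by rewrite -(linmap_sum _ _ lPsi) (hS_right hH) (linmapZ lPsi).
rewrite (eq_bigr _ (fun q _ => antipode q)).
rewrite (D_counitr_sum (f := fun b => Psi p.1 b 1)); last by rewrite /Psi; solve_lin.
by rewrite /Psi (iH_one hA) mulr1.
Qed.

Lemma f_H_stable : H_stable D e act f.
Proof.
move=> h x y.
under eq_bigr => p _ do rewrite f_ofE.
rewrite -(linform_sum _ _ lam_linear) -(linmap_sum _ _ pi_linear) F_act_sum.
rewrite (linmap_sum _ _ pi_linear) (linform_sum _ _ lam_linear) f_ofE -(lam_ad hlam).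
by apply: eq_bigr => p _; rewrite !pi_mul !pi_iH.
Qed.


Lemma G_pi_r_sum (M : lmodType k) (Th : A -> H -> M) c : bilinmap Th ->
  \sum_(s <- G c) Th s.1 (pi s.2) = 0.
Proof.
move=> bT; have bTh : bilinmap (fun a b => Th (a, b).1 (a, b).2) by solve_lin.
by have := teq_sum (Phi := fun P => Th P.1 P.2) (hbitriv.2.2 c) bTh; rewrite big_map big_nil.
Qed.

Lemma DA2_lam_pi_F x y :
  \sum_(p <- DA (iB x)) \sum_(q <- DA (iB y)) lam (pi (p.2 * q.2)) *: F p.1 q.1 =
  F (iB x) (iB y).
Proof.
under eq_bigr => p _ do under eq_bigr => q _ do rewrite pi_mul.
rewrite (DA_iB_pi_sum (Th := fun a h => \sum_(q <- DA (iB y)) lam (h * pi q.2) *: F a q.1));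
  last by solve_lin.
under eq_bigr => q _ do rewrite mul1r.
rewrite (DA_iB_pi_sum (Th := fun a h => lam h *: F (iB x) a)); last by solve_lin.
by rewrite (lam_one hlam) scale1r.
Qed.

Section DegreeR.
Variables (i j : nat) (x y : B).
Hypotheses (Ex : Bg i x = x) (Ey : Bg j y = y) (Er : (i + j)%N = r).

Lemma DA_F_lam_pi : \sum_(P <- DA (F (iB x) (iB y))) lam (pi P.2) *: P.1 = f x y *: 1.
Proof.
rewrite {1}(Ahom0_iH_pi (F_deg_r_Ahom0 Ex Ey Er)).
rewrite (DA_iH_sum (Phi := fun P => lam (pi P.2) *: P.1)); last by solve_lin.
under eq_bigr => q _ do rewrite pi_iH.
by rewrite (linmap_sumZ _ _ _ iH_linear) (lam_right_int hlam) (linmapZ iH_linear) (iH_one hA) f_ofE.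
Qed.

Lemma DA2_lam_pi_F_outer :
  \sum_(p <- DA (iB x)) \sum_(q <- DA (iB y)) lam (pi (F p.2 q.2)) *: (p.1 * q.1) =
  \sum_(c <- co x) \sum_(d <- co y) f c.2 d.2 *: iH (c.1 * d.1).
Proof.
rewrite (DA_iB2_sum (K := fun a b c d => lam (pi (F b d)) *: (a * c))); last 2 first.
- by solve_lin.
- by solve_lin.
rewrite (DB2_sum_1x1y (Psi := fun u1 u2 v1 v2 => \sum_(c <- co u2) \sum_(d <- co v2)
    lam (pi (F (iB c.2) (iB d.2))) *: (iB u1 * iH c.1 * (iB v1 * iH d.1))) Ex Ey);
  try by solve_lin.
  apply: eq_bigr => c _; apply: eq_bigr => d _.
  by rewrite -f_ofE (iB_one hA) !mul1r -(iH_mul hA).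
move=> u1 m u2 v1 n v2 lt_mn.
rewrite co_Bg_sum; last by solve_lin.
apply: big1 => c _; rewrite co_Bg_sum; last by solve_lin.
by apply: big1 => d _; rewrite lam_pi_F_off_degree ?scale0r //; lia.
Qed.

Lemma F_iB_deg_r : F (iB x) (iB y) =
  f x y *: 1 - \sum_(c <- co x) \sum_(d <- co y) f c.2 d.2 *: iH (c.1 * d.1).
Proof.
pose Phi (P : A * A) := lam (pi P.2) *: P.1.
have Phi_bilin : bilinmap (fun a b => Phi (a, b)) by rewrite /Phi; solve_lin.
have := teq_sum (compat hFG (iB x) (iB y)) Phi_bilin.
rewrite /Phi !big_cat !big_allpairs_dep /= DA2_lam_pi_F DA2_lam_pi_F_outer DA_F_lam_pi.
have DA_G : \sum_(p <- DA (iB x)) \sum_(s <- G (iB y)) lam (pi (p.2 * s.2)) *: (p.1 * s.1) = 0.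
  apply: big1 => p _; under eq_bigr => s _ do rewrite pi_mul.
  by apply: (G_pi_r_sum (Th := fun a h => lam (pi p.2 * h) *: (p.1 * a))); solve_lin.
have G_DA : \sum_(s <- G (iB x)) \sum_(q <- DA (iB y)) lam (pi (s.2 * q.2)) *: (s.1 * q.1) = 0.
  under eq_bigr => s _ do under eq_bigr => q _ do rewrite pi_mul.
  apply: (G_pi_r_sum (Th := fun a h => \sum_(q <- DA (iB y)) lam (h * pi q.2) *: (a * q.1))).
  by solve_lin.
have G_mul : \sum_(P <- G (iB x * iB y)) lam (pi P.2) *: P.1 = 0.
  by apply: (G_pi_r_sum (Th := fun a h => lam h *: a)); solve_lin.
by rewrite DA_G G_DA G_mul !addr0 => <-; rewrite addrK.
Qed.

End DegreeR.

Section InducedForm.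
Variable ft : A -> A -> k.
Hypotheses (ft_bilin : bilin ft)
  (ftE : forall x h y h', ft (iB x * iH h) (iB y * iH h') = f x (act h y) * e h').

Section SmashDegreeR.
Variables (i j : nat) (x y : B) (h g : H).
Hypotheses (Ex : Bg i x = x) (Ey : Bg j y = y) (Er : (i + j)%N = r).

Lemma f_off_degree_act m n u v s : (m + n < i + j)%N -> f (Bg m u) (act s (Bg n v)) = 0.
Proof. by move=> lt_mn; rewrite -(Bg_act hB) f_ofE lam_pi_F_off_degree //; lia. Qed.

Lemma F_smash_deg_r : F (iB x * iH h) (iB y * iH g) =
  \sum_(s <- D h) f x (act s.1 y) *: iH (s.2 * g) -
  \sum_(c <- co x) \sum_(s <- D h) \sum_(d <- co y)
    f c.2 (act s.2 d.2) *: iH (c.1 * s.1 * (d.1 * g)).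
Proof.
have Bg_act_y s : Bg j (act s y) = act s y by rewrite (Bg_act hB) Ey.
rewrite F_mul_iH_mid mulrA (smash_mul hA) big_distrl /= (linmap_sum _ _ (F_linear_r _)).
have termE (s : H * H) : F (iB x) (iB (act s.1 y) * iH s.2 * iH g) =
    f x (act s.1 y) *: iH (s.2 * g) -
    \sum_(c <- co x) \sum_(d <- co (act s.1 y)) f c.2 d.2 *: iH (c.1 * d.1 * (s.2 * g)).
  rewrite !F_mul_iHr -mulrA -(iH_mul hA) (F_iB_deg_r Ex (Bg_act_y s.1) Er) mulrBl.
  rewrite mulr_algl big_distrl; congr (_ - _); apply: eq_bigr => c _.
  by rewrite big_distrl; apply: eq_bigr => d _; rewrite [in RHS](iH_mul hA) scalerAl.
rewrite (eq_bigr _ (fun s _ => termE s)) sumrB; congr (_ - _).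
rewrite exchange_big; apply: eq_bigr => c _ /=.
pose Th hh w := f c.2 w *: iH (c.1 * hh * g).
have Th_bilin : bilinmap Th by rewrite /Th; have := f_bilin; solve_lin.
transitivity (\sum_(s <- D h) \sum_(d <- co (act s.1 y)) Th (d.1 * s.2) d.2).
  by apply: eq_bigr => s _; apply: eq_bigr => d _; rewrite /Th !mulrA.
rewrite (co_act_sum _ _ Th_bilin); apply: eq_bigr => s _; apply: eq_bigr => d _.
by rewrite /Th !mulrA.
Qed.

Lemma DA2_ft_outer :
  \sum_(P <- DA (iB x * iH h)) \sum_(Q <- DA (iB y * iH g)) ft P.2 Q.2 *: (P.1 * Q.1) =
  \sum_(c <- co x) \sum_(s <- D h) \sum_(d <- co y)
    f c.2 (act s.2 d.2) *: iH (c.1 * s.1 * (d.1 * g)).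
Proof.
rewrite (DA_smash2_sum (K := fun a b c d => ft b d *: (a * c))); try by solve_lin.
rewrite (DB2_sum_1x1y (Psi := fun u1 u2 v1 v2 => \sum_(c <- co u2) \sum_(s <- D h)
    \sum_(d <- co v2) \sum_(t <- D g) ft (iB c.2 * iH s.2) (iB d.2 * iH t.2) *:
      (iB u1 * iH (c.1 * s.1) * (iB v1 * iH (d.1 * t.1)))) Ex Ey); try by solve_lin.
  apply: eq_bigr => c _; apply: eq_bigr => s _; apply: eq_bigr => d _.
  under eq_bigr => t _ do rewrite ftE (iB_one hA) !mul1r (mulrC (f _ _)) -scalerA.
  rewrite (D_counitr_sum (f := fun t1 => f c.2 (act s.2 d.2) *: (iH (c.1 * s.1) * iH (d.1 * t1))));
    last by solve_lin.
  by rewrite -!(iH_mul hA).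
move=> u1 m u2 v1 n v2 lt_mn; rewrite co_Bg_sum; last by solve_lin.
apply: big1 => c _; apply: big1 => s _; rewrite co_Bg_sum; last by solve_lin.
apply: big1 => d _; apply: big1 => t _.
by rewrite ftE f_off_degree_act ?mul0r ?scale0r.
Qed.

Lemma DA2_ft_inner :
  \sum_(P <- DA (iB x * iH h)) \sum_(Q <- DA (iB y * iH g)) ft P.1 Q.1 *: (P.2 * Q.2) =
  \sum_(s <- D h) f x (act s.1 y) *: iH (s.2 * g).
Proof.
rewrite (DA_smash2_sum (K := fun a b c d => ft a c *: (b * d))); try by solve_lin.
rewrite (DB2_sum_x1y1 (Psi := fun u1 u2 v1 v2 => \sum_(c <- co u2) \sum_(s <- D h)
    \sum_(d <- co v2) \sum_(t <- D g) ft (iB u1 * iH (c.1 * s.1)) (iB v1 * iH (d.1 * t.1)) *: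
      (iB c.2 * iH s.2 * (iB d.2 * iH t.2))) Ex Ey); try by solve_lin.
  rewrite (teq_sum (co_oneB hB)); last by solve_lin.
  rewrite big_seq1 /=; apply: eq_bigr => s _.
  rewrite (teq_sum (co_oneB hB)); last by solve_lin.
  rewrite big_seq1 /=.
  under eq_bigr => t _ do rewrite ftE !mul1r (iB_one hA) !mul1r (mulrC (f _ _)) -scalerA.
  rewrite (D_counitl_sum (f := fun t2 => f x (act s.1 y) *: (iH s.2 * iH t2))); last by solve_lin.
  by rewrite -(iH_mul hA).
move=> m u1 u2 n v1 v2 lt_mn.
apply: big1 => c _; apply: big1 => s _; apply: big1 => d _; apply: big1 => t _.
by rewrite ftE f_off_degree_act ?mul0r ?scale0r.
Qed.

Lemma F_dc_smash_deg_r :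
  F (iB x * iH h) (iB y * iH g) + dc DA ft (iB x * iH h) (iB y * iH g) = 0.
Proof.
rewrite /dc; under eq_bigr => P _ do rewrite sumrB.
by rewrite sumrB DA2_ft_outer DA2_ft_inner F_smash_deg_r addrC addrA subrK subrr.
Qed.

End SmashDegreeR.

Lemma F_dc_deg_r i j a b : Ahom Bg iB iH i a -> Ahom Bg iB iH j b -> (i + j)%N = r ->
  F a b + dc DA ft a b = 0.
Proof.
move=> [t [/allP Ht ->]] [t' [/allP Ht' ->]] Er.
have lin_l v : linmap (fun u => F u v + dc DA ft u v) by rewrite /dc; solve_lin.
have lin_r u : linmap (fun v => F u v + dc DA ft u v) by rewrite /dc; solve_lin.
rewrite /smash (linmap_sum _ _ (lin_l _)) big1_seq // => p /andP [_ /Ht /eqP Ep].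
rewrite (linmap_sum _ _ (lin_r _)) big1_seq // => q /andP [_ /Ht' /eqP Eq].
exact: (F_dc_smash_deg_r _ _ Ep Eq Er).
Qed.

End InducedForm.

End NegativeDegreeCocycle.
End Bosonization.

Theorem mainTheorem2 (k : closedFieldType) (k_char0 : [pchar k] =i pred0)
  (H : algType k) (D : H -> tens H H) (e : H -> k) (S : H -> H)
  (hH : hopf_algebra D e S)
  (lam : H -> k) (hlam : integral_cond D e S lam)
  (B : algType k) (act : H -> B -> B) (co : B -> tens H B)
  (DB : B -> tens B B) (eB : B -> k) (Bg : nat -> B -> B)
  (hB : YD_graded_bialgebra D e S act co DB eB Bg)
  (A : algType k) (DA : A -> tens A A) (eA : A -> k)
  (iB : B -> A) (iH : H -> A) (pi : A -> H)
  (hA : bosonization D e act co DB eB DA eA iB iH pi)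
  (r : nat) (hr : (0 < r)%N)
  (F : A -> A -> A) (G : A -> tens A A)
  (hFG : Zb2 DA eA F G)
  (hbitriv : H_bitrivial Bg iB iH pi F G)
  (hdeg : homog_neg Bg iB iH r F G) :
  (* F maps (B (x) B)_r into A_0 = H *)
  (forall i j x y, Bg i x = x -> Bg j y = y -> (i + j)%N = r ->
     Ahom Bg iB iH 0 (F (iB x) (iB y))) /\
  (* 1. f is an H-stable Hochschild 2-cocycle *)
  hochschild_cocycle eB (f_of Bg iB pi lam r F) /\
  H_stable D e act (f_of Bg iB pi lam r F) /\
  (* 2. F + d^c ft vanishes on (A (x) A)_r, for the induced map ft *)
  (forall ft : A -> A -> k, bilin ft ->
     (forall x h y h', ft (iB x * iH h) (iB y * iH h')
                       = f_of Bg iB pi lam r F x (act h y) * e h') ->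
     forall i j a b, Ahom Bg iB iH i a -> Ahom Bg iB iH j b -> (i + j)%N = r ->
       F a b + dc DA ft a b = 0).
Proof.
split; first by move=> i j x y; exact: (F_deg_r_Ahom0 (k := k) hA hdeg).
split; first exact: (f_cocycle (k := k) hH hB hA hlam hFG hdeg).
split; first exact: (f_H_stable (k := k) hH hB hA hlam hFG hbitriv hdeg).
move=> ft ft_bilin ftE i j a b.
exact: (F_dc_deg_r (k := k) hH hB hA hlam hFG hbitriv hdeg ft_bilin ftE).
Qed.
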